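(* Let $S$ be a specialisation independent scheduling rule, $G$ a p-goal and $\phi$ a substitution. If there is a p-SLD derivation $G\xrightarrow{S,X,\theta}\cdot$ via $S$ with template $X$ and composed mgu $\theta$ (the composition of the mgus of its steps), then there is a p-SLD derivation $G\theta\phi\xrightarrow{S,X}\cdot$ via $S$ with the same template $X$.
   Context: A p-atom is a pair $a[p]$ of an atom $a$ and a rational priority $p$. A p-goal is a finite set of p-atoms with pairwise distinct priorities, regarded as a list ordered by increasing priority. Substitutions act on atoms and leave priorities unchanged. A clause is $h\leftarrow B$ with $h$ an atom and $B$ a p-goal. For p-goals with no common priority, $F+G=F\cup G$; $F|G$ denotes $F+G$ when all priorities of $F$ are smaller than those of $G$. A shifting $\underline{\pi}$ is a strictly increasing bijection $\mathbb{Q}\to\mathbb{Q}$ acting on priorities. Priority derivation step: for a p-goal $a|F$ ($a$ of least priority), clause $c=(h\leftarrow B)$, renaming $\xi$ with $var(a|F)\cap var(c\xi)=\emptyset$, idempotent relevant mgu $\theta$ of $a$ and $h\xi$, shifting $\underline{\pi}$ with $F$, $B\xi\underline{\pi}$ sharing no priority: $a|F\xrightarrow{c\xi,\theta}(F+B\xi\underline{\pi})\theta$. A p-SLD derivation $G_0\xrightarrow{c_0\xi_0,\theta_0}G_1\cdots\xrightarrow{c_{k}\xi_{k},\theta_{k}}G_{k+1}$ is a sequence of such steps with each renamed clause variable-disjoint from $G_0$ and all earlier renamed clauses; its template is $c_0,\dots,c_k$ and it is written $G_0\xrightarrow{M,\theta}G_{k+1}$ with $\theta=\theta_0\cdots\theta_k$;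 it is via $S$ if all steps lie in $S$. Lowering: for $c=(h\leftarrow B)$, a step $a\lambda\underline{\sigma}|(K\lambda\underline{\sigma}+X)\xrightarrow{c}(X+K\lambda\underline{\sigma}+B\xi''\underline{\theta}'')\alpha''$ is a lowering by $X$ of $a|K\xrightarrow{c}(K+B\xi'\underline{\theta}')\alpha'$ ($\lambda$ a substitution, $\underline\sigma$ a shifting); a congruent lowering if some shifting $\underline{\rho}$ has $K\underline{\rho}=K\underline{\sigma}$ and $B\underline{\theta}'\underline{\rho}=B\underline{\theta}''$. Steps are congruent lowerings of each other if each is a congruent lowering of the other. A set $S$ of steps is complete if (i) whenever some step $G\xrightarrow{c}\cdot$ exists, some step $G\xrightarrow{c}\cdot$ lies in $S$, and (ii) $S$ contains every step that is a congruent lowering of each other with a step of $S$; it is specialisation independent if whenever $Ds_1,Ds_2\in S$ and $Ds_2$ is a lowering of $Ds_1$ by $X$, $Ds_2$ is a congruent lowering of $Ds_1$ by $X$. A specialisation independent scheduling rule is a complete specialisation independent set of steps. *)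

From Stdlib Require List Permutation.
From mathcomp Require Import all_boot all_order all_algebra.

Set Implicit Arguments.
Unset Strict Implicit.
Unset Printing Implicit Defensive.

Inductive term : Type :=
| Var (x : nat)
| Fun (f : nat) (args : list term).

Record atom : Type := Atom { apred : nat; aargs : list term }.

Definition subst := nat -> term.

Fixpoint tsubst (s : subst) (t : term) : term :=
  match t with
  | Var x => s x
  | Fun f ts => Fun f (List.map (tsubst s) ts)
  end.

Definition asubst (s : subst) (a : atom) : atom :=
  Atom (apred a) (List.map (tsubst s) (aargs a)).

(* composition [s1 s2]: first apply s1, then s2 (x(s1 s2) = (x s1) s2) *)
Definition scomp (s1 s2 : subst) : subst := fun x => tsubst s2 (s1 x).

Definition sid : subst := Var.

Fixpoint tvars (t : term) : list nat :=
  match t with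
  | Var x => x :: nil
  | Fun _ ts => List.flat_map tvars ts
  end.

Definition avars (a : atom) : list nat := List.flat_map tvars (aargs a).

Definition disjointL (l1 l2 : list nat) : Prop :=
  forall x, List.In x l1 -> ~ List.In x l2.

Definition unifier (th : subst) (a b : atom) : Prop := asubst th a = asubst th b.

Definition mgu (th : subst) (a b : atom) : Prop :=
  unifier th a b /\
  forall s, unifier s a b -> exists d, forall x, s x = tsubst d (th x).

Definition idempotent (th : subst) : Prop :=
  forall x, tsubst th (th x) = th x.

(* var(th) = dom(th) \cup range(th) is contained in var(a) \cup var(b) *)
Definition relevant (th : subst) (a b : atom) : Prop :=
  forall x, th x <> Var x ->
    List.In x (avars a ++ avars b) /\
    (forall y, List.In y (tvars (th x)) -> List.In y (avars a ++ avars b)).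

Definition renaming (xi : subst) : Prop :=
  (forall x, exists y, xi x = Var y) /\
  (forall x y, xi x = xi y -> x = y) /\
  (forall y, exists x, xi x = Var y).

Definition patom := (atom * rat)%type.

(* a p-goal is represented as the list of its p-atoms ordered by strictly
   increasing priority (so priorities are pairwise distinct) *)
Definition pgoal := list patom.

Definition wf_pgoal (G : pgoal) : Prop :=
  sorted (fun u v : patom => (u.2 < v.2)%R) G.

Definition prios (G : pgoal) : list rat := List.map snd G.

Definition pgvars (G : pgoal) : list nat := List.flat_map (fun u => avars u.1) G.

Definition psubst (s : subst) (G : pgoal) : pgoal :=
  List.map (fun u => (asubst s u.1, u.2)) G.

Definition pshift (pi : rat -> rat) (G : pgoal) : pgoal :=
  List.map (fun u => (u.1, pi u.2)) G.

Definition no_common_prio (F G : pgoal) : Prop :=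
  forall q, List.In q (prios F) -> ~ List.In q (prios G).

(* [psum F G H] : H = F + G (= F \cup G), for p-goals F, G without
   common priority *)
Definition psum (F G H : pgoal) : Prop :=
  wf_pgoal F /\ wf_pgoal G /\ no_common_prio F G /\
  wf_pgoal H /\ Permutation.Permutation (F ++ G) H.

Definition shifting (pi : rat -> rat) : Prop :=
  (forall x y : rat, (x < y)%R -> (pi x < pi y)%R) /\ bijective pi.

Record clause : Type := Clause { chead : atom; cbody : pgoal }.

(* a step  G --(c xi, th)--> R  using the shifting pi *)
Record step : Type := Step {
  st_goal : pgoal;
  st_clause : clause;
  st_ren : subst;
  st_mgu : subst;
  st_shift : rat -> rat;
  st_res : pgoal }.

Definition rcvars (d : step) : list nat :=
  avars (asubst (st_ren d) (chead (st_clause d))) ++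
  pgvars (psubst (st_ren d) (cbody (st_clause d))).

Definition is_step (d : step) : Prop :=
  exists (a : atom) (p : rat) (F : pgoal),
    st_goal d = (a, p) :: F /\
    wf_pgoal (st_goal d) /\
    wf_pgoal (cbody (st_clause d)) /\
    renaming (st_ren d) /\
    disjointL (pgvars (st_goal d)) (rcvars d) /\
    idempotent (st_mgu d) /\
    relevant (st_mgu d) a (asubst (st_ren d) (chead (st_clause d))) /\
    mgu (st_mgu d) a (asubst (st_ren d) (chead (st_clause d))) /\
    shifting (st_shift d) /\
    exists H : pgoal,
      psum F (pshift (st_shift d) (psubst (st_ren d) (cbody (st_clause d)))) H /\
      st_res d = psubst (st_mgu d) H.

Fixpoint chain (G : pgoal) (ds : list step) : Prop :=
  match ds with
  | nil => True
  | d :: ds' => st_goal d = G /\ chain (st_res d) ds'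
  end.

(* each renamed clause is variable-disjoint from G0 and from all earlier
   renamed clauses; [seen] accumulates these variables *)
Fixpoint fresh_ok (seen : list nat) (ds : list step) : Prop :=
  match ds with
  | nil => True
  | d :: ds' => disjointL (rcvars d) seen /\ fresh_ok (seen ++ rcvars d) ds'
  end.

Definition pderivation (G0 : pgoal) (ds : list step) : Prop :=
  ds <> nil /\ List.Forall is_step ds /\ chain G0 ds /\ fresh_ok (pgvars G0) ds.

Definition template (ds : list step) : list clause := List.map st_clause ds.

Definition composed_mgu (ds : list step) : subst :=
  List.fold_right (fun d acc => scomp (st_mgu d) acc) sid ds.

Definition via (S : step -> Prop) (ds : list step) : Prop := List.Forall S ds.

Definition lowering_with (d1 d2 : step) (X : pgoal) (lam : subst)
    (sig : rat -> rat) (K : pgoal) : Prop :=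
  is_step d1 /\ is_step d2 /\ st_clause d2 = st_clause d1 /\ shifting sig /\
  exists (a : atom) (p : rat) (KX : pgoal),
    st_goal d1 = (a, p) :: K /\
    psum (pshift sig (psubst lam K)) X KX /\
    st_goal d2 = (asubst lam a, sig p) :: KX.

Definition lowering (d1 d2 : step) (X : pgoal) : Prop :=
  exists lam sig K, lowering_with d1 d2 X lam sig K.

Definition cong_lowering (d1 d2 : step) (X : pgoal) : Prop :=
  exists lam sig K, lowering_with d1 d2 X lam sig K /\
    exists rho, shifting rho /\
      pshift rho K = pshift sig K /\
      pshift rho (pshift (st_shift d1) (cbody (st_clause d1)))
        = pshift (st_shift d2) (cbody (st_clause d1)).

Definition mutual_cong_lowering (d1 d2 : step) : Prop :=
  (exists X, cong_lowering d1 d2 X) /\ (exists X, cong_lowering d2 d1 X).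

Definition complete (S : step -> Prop) : Prop :=
  (forall d, S d -> is_step d) /\
  (forall d, is_step d -> exists d', S d' /\
      st_goal d' = st_goal d /\ st_clause d' = st_clause d) /\
  (forall d d', S d -> is_step d' -> mutual_cong_lowering d d' -> S d').

Definition spec_independent (S : step -> Prop) : Prop :=
  forall d1 d2 X, S d1 -> S d2 -> lowering d1 d2 X -> cong_lowering d1 d2 X.

Definition si_scheduling_rule (S : step -> Prop) : Prop :=
  complete S /\ spec_independent S.

(* Induction along the derivation, carrying an instance [rho (psi G_k)] of the
   current goal and a [delta] with [delta . psi = phi . theta_k ... theta_n] on the
   variables of [G_k].  Renaming the next clause apart makes the selected atom of
   the instance unifiable with the renamed head ([delta] and the remaining mgus give
   a unifier), so Robinson's algorithm yields an idempotent relevant mgu, and the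
   resulting step lowers the original one by the empty p-goal.  Completeness gives a
   step of [S] with the same goal and clause; specialisation independence makes it a
   congruent lowering, which determines its priority shifting up to a shifting [rh];
   closure under mutual congruent lowering then admits our renaming and mgu with that
   shifting.  Since the original mgu is most general, the invariant is restored. *)

From Stdlib Require List.
From Stdlib Require Import Permutation Lia Classical_Prop.
From mathcomp Require Import all_boot all_order all_algebra zify.
(* Imported after MathComp so that [Defs.idempotent] shadows [ssrfun.idempotent]. *)
From Pilot Require Import Defs.

Set Implicit Arguments.
Unset Strict Implicit.
Unset Printing Implicit Defensive.

(** * Terms and substitutions *)

Section TermInd.
Variable P : term -> Prop.
Hypothesis P_var : forall x, P (Var x).
Hypothesis P_fun : forall f ts, List.Forall P ts -> P (Fun f ts).

Fixpoint term_nested_ind (t : term) : P t :=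
  match t with
  | Var x => P_var x
  | Fun f ts => P_fun f ((fix all_args (l : list term) : List.Forall P l :=
      match l with
      | nil => List.Forall_nil _
      | u :: l' => List.Forall_cons _ (term_nested_ind u) (all_args l')
      end) ts)
  end.
End TermInd.

Definition agree_on (V : list nat) (s1 s2 : subst) : Prop :=
  forall x, List.In x V -> s1 x = s2 x.

Lemma In_mem (T : eqType) (x : T) (l : list T) : List.In x l <-> x \in l.
Proof.
elim: l => [|y l IH] //=; rewrite in_cons.
by split=> [[->|/IH->]|/orP[/eqP->|/IH]]; rewrite ?eqxx ?orbT; auto.
Qed.

Lemma tsubst_comp s1 s2 t : tsubst s2 (tsubst s1 t) = tsubst (scomp s1 s2) t.
Proof.
elim/term_nested_ind: t => //= f ts IH; congr Fun.
by rewrite List.map_map; apply: List.map_ext_Forall.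
Qed.

Lemma scompA s1 s2 s3 x : scomp (scomp s1 s2) s3 x = scomp s1 (scomp s2 s3) x.
Proof. exact: tsubst_comp. Qed.

Lemma tsubst_sid t : tsubst sid t = t.
Proof.
elim/term_nested_ind: t => //= f ts IH; congr Fun.
by rewrite -[RHS]List.map_id; apply: List.map_ext_Forall.
Qed.

Lemma tsubst_ext s1 s2 t : agree_on (tvars t) s1 s2 -> tsubst s1 t = tsubst s2 t.
Proof.
elim/term_nested_ind: t => [x|f ts IH] E /=; first by apply: E; left.
rewrite List.Forall_forall in IH; congr Fun; apply: List.map_ext_in => u Hu.
by apply: IH => // x Hx; apply: E; apply/List.in_flat_map; exists u.
Qed.

Lemma tsubst_id_on s t : agree_on (tvars t) s sid -> tsubst s t = t.
Proof. by move=> E; rewrite (tsubst_ext E) tsubst_sid. Qed.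

Lemma eq_tsubst_agree s1 s2 t : tsubst s1 t = tsubst s2 t -> agree_on (tvars t) s1 s2.
Proof.
elim/term_nested_ind: t => [x|f ts IH] /= E y; first by case=> [<-|[]].
move=> /List.in_flat_map [u [Hu Hy]]; rewrite List.Forall_forall in IH.
by case: E => /List.map_ext_in_iff E; apply: IH Hu (E u Hu) y Hy.
Qed.

Lemma tvars_tsubst s t y :
  List.In y (tvars (tsubst s t)) <-> exists x, List.In x (tvars t) /\ List.In y (tvars (s x)).
Proof.
elim/term_nested_ind: t => [x|f ts IH] /=.
  by split=> [Hy|[z [[<-|[]] Hy]]] //; exists x; split; first left.
rewrite List.Forall_forall in IH; split.
  move=> /List.in_flat_map [v [/List.in_map_iff [u [<- Hu]] /(IH u Hu) [x [Hx Hy]]]].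
  by exists x; split=> //; apply/List.in_flat_map; exists u.
move=> [x [/List.in_flat_map [u [Hu Hx]] Hy]]; apply/List.in_flat_map.
by exists (tsubst s u); split; [apply: List.in_map | apply/(IH u Hu); exists x].
Qed.

Fixpoint tsize (t : term) : nat :=
  match t with
  | Var _ => 1
  | Fun _ ts => (sumn (List.map tsize ts)).+1
  end.

Lemma In_leq_sumn (l : list nat) n : List.In n l -> n <= sumn l.
Proof. by elim: l => [|m l IH] //= [->|/IH]; lia. Qed.

Lemma tsize_tsubst_var s x t : List.In x (tvars t) -> tsize (s x) <= tsize (tsubst s t).
Proof.
elim/term_nested_ind: t => [y [<-|[]] //|f ts IH] /List.in_flat_map [u [Hu Hx]] /=.
rewrite List.Forall_forall in IH; have := IH u Hu Hx.
have := In_leq_sumn (List.in_map tsize _ _ (List.in_map (tsubst s) _ _ Hu)); lia.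
Qed.

Lemma occurs_check s x t : List.In x (tvars t) -> t <> Var x -> s x <> tsubst s t.
Proof.
case: t => [y [<-|[]] //|f ts xt _ sx].
case/List.in_flat_map: xt => u [Hu Hx]; have := tsize_tsubst_var s Hx; rewrite sx /=.
have := In_leq_sumn (List.in_map tsize _ _ (List.in_map (tsubst s) _ _ Hu)); lia.
Qed.

(** * Existence of idempotent relevant most general unifiers *)

Definition equation := (term * term)%type.

Definition evars (E : list equation) : list nat :=
  List.flat_map (fun e => tvars e.1 ++ tvars e.2) E.

Definition solves (s : subst) (E : list equation) : Prop :=
  forall e, List.In e E -> tsubst s e.1 = tsubst s e.2.

Definition relevant_to (V : list nat) (th : subst) : Prop :=
  forall x, th x <> Var x ->
    List.In x V /\ forall y, List.In y (tvars (th x)) -> List.In y V.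

Definition mgu_eqs (E : list equation) (th : subst) : Prop :=
  [/\ solves th E, (forall s, solves s E -> exists d, forall x, s x = tsubst d (th x)),
      idempotent th & relevant_to (evars E) th].

Definition esize (E : list equation) : nat :=
  sumn (List.map (fun e => tsize e.1 + tsize e.2) E).

Definition nvars (E : list equation) : nat := size (undup (evars E)).

Lemma solves_cons s e E :
  solves s (e :: E) <-> tsubst s e.1 = tsubst s e.2 /\ solves s E.
Proof.
split=> [sol|[se sE] e' [ee'|/sE //]]; last by rewrite -ee'.
by split=> [|e' He']; apply: sol; [left|right].
Qed.

Lemma solves_app s E1 E2 : solves s (E1 ++ E2) <-> solves s E1 /\ solves s E2.
Proof.
split=> [sol|[s1 s2] e /List.in_app_iff [/s1|/s2] //].
by split=> e He; apply: sol; apply: List.in_or_app; [left|right].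
Qed.

Lemma evars_cons e E x :
  List.In x (evars (e :: E)) <->
  List.In x (tvars e.1) \/ List.In x (tvars e.2) \/ List.In x (evars E).
Proof. by rewrite /= !List.in_app_iff; tauto. Qed.

Lemma evars_app E1 E2 x :
  List.In x (evars (E1 ++ E2)) <-> List.In x (evars E1) \/ List.In x (evars E2).
Proof. by rewrite /evars List.flat_map_app List.in_app_iff. Qed.

Lemma esize_app E1 E2 : esize (E1 ++ E2) = esize E1 + esize E2.
Proof. by rewrite /esize List.map_app sumn_cat. Qed.

Section Combine.
Variables ts us : list term.
Hypothesis len : length ts = length us.

Lemma solves_combine s :
  solves s (List.combine ts us) <-> List.map (tsubst s) ts = List.map (tsubst s) us.
Proof.
elim: ts us len => [|t ts' IH] [|u us'] // => [_|[/IH {}IH]]; first by split=> // _ e [].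
by rewrite solves_cons IH /=; split=> [[-> ->]|[-> ->]].
Qed.

Lemma evars_combine x :
  List.In x (evars (List.combine ts us)) <->
  List.In x (List.flat_map tvars ts) \/ List.In x (List.flat_map tvars us).
Proof.
elim: ts us len => [|t ts' IH] [|u us'] // => [_|[/IH {}IH]] /=; first by tauto.
by rewrite -/(evars _) !List.in_app_iff IH; tauto.
Qed.

Lemma esize_combine :
  esize (List.combine ts us) = sumn (List.map tsize ts) + sumn (List.map tsize us).
Proof.
elim: ts us len => [|t ts' IH] [|u us'] // [/IH {}IH] /=.
by rewrite /esize /= -/(esize _) IH; lia.
Qed.
End Combine.

Lemma nvars_le E1 E2 :
  (forall x, List.In x (evars E1) -> List.In x (evars E2)) -> nvars E1 <= nvars E2.
Proof.
move=> sub; apply: uniq_leq_size (undup_uniq _) _ => y.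
by rewrite !mem_undup => /In_mem /sub /In_mem.
Qed.

Lemma nvars_lt E1 E2 x :
  (forall y, List.In y (evars E1) -> List.In y (evars E2) /\ y <> x) ->
  List.In x (evars E2) -> nvars E1 < nvars E2.
Proof.
move=> sub x2; have : uniq (x :: undup (evars E1)).
  by rewrite /= undup_uniq andbT mem_undup; apply/negP => /In_mem /sub [].
move/uniq_leq_size; apply=> y; rewrite inE mem_undup.
by case/orP=> [/eqP-> | /In_mem /sub [y2 _]]; rewrite mem_undup; apply/In_mem.
Qed.

Lemma relevant_to_vars V th z w :
  relevant_to V th -> List.In w (tvars (th z)) -> w = z \/ List.In w V.
Proof.
move=> rel wz; have [thz|/rel [_ /(_ w wz)]] := classic (th z = Var z); last by right.
by move: wz; rewrite thz => -[<-|[]]; left.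
Qed.

Lemma idempotentP th :
  idempotent th <-> forall v w, List.In w (tvars (th v)) -> th w = Var w.
Proof.
split=> [idem v | fixed v]; last by apply: tsubst_id_on => w /fixed.
by apply: eq_tsubst_agree; rewrite idem tsubst_sid.
Qed.

Lemma mgu_eqs_equiv E E' th :
  (forall s, solves s E <-> solves s E') ->
  (forall x, List.In x (evars E') -> List.In x (evars E)) ->
  mgu_eqs E' th -> mgu_eqs E th.
Proof.
move=> eqE sub [sol most idem rel]; split=> //; first exact/eqE.
  by move=> s /eqE /most.
by move=> x /rel [Hx Hr]; split=> [|y /Hr]; apply: sub.
Qed.

Lemma mgu_eqs_nil : mgu_eqs [::] sid.
Proof. by split=> [e []|s _|//|x /(_ erefl) []]; exists s. Qed.

Lemma mgu_eqs_trivial x E th : mgu_eqs E th -> mgu_eqs ((Var x, Var x) :: E) th.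
Proof.
apply: mgu_eqs_equiv => [s|y]; last by rewrite evars_cons; tauto.
by rewrite solves_cons; split=> [[]|].
Qed.

Lemma mgu_eqs_swap t u E th : mgu_eqs ((t, u) :: E) th -> mgu_eqs ((u, t) :: E) th.
Proof.
apply: mgu_eqs_equiv => [s|y]; last by rewrite !evars_cons; tauto.
by rewrite !solves_cons; split=> -[? ?].
Qed.

Lemma mgu_eqs_decompose f ts us E th : length ts = length us ->
  mgu_eqs (List.combine ts us ++ E) th -> mgu_eqs ((Fun f ts, Fun f us) :: E) th.
Proof.
move=> len; apply: mgu_eqs_equiv => [s|x].
  rewrite solves_app solves_cons solves_combine //=.
  by split=> [[[E1] E2]|[-> E2]].
by rewrite evars_app evars_combine // evars_cons /=; tauto.
Qed.

Definition subst1 (x : nat) (t : term) : subst :=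
  fun y => if y == x then t else Var y.

Definition elim_eqs (x : nat) (t : term) (E : list equation) : list equation :=
  List.map (fun e => (tsubst (subst1 x t) e.1, tsubst (subst1 x t) e.2)) E.

Lemma subst1_absorb s x t u :
  s x = tsubst s t -> tsubst s (tsubst (subst1 x t) u) = tsubst s u.
Proof.
move=> sx; rewrite tsubst_comp; apply: tsubst_ext => y _.
by rewrite /scomp /subst1; case: eqP => [->|].
Qed.

Lemma tvars_subst1 x t u y : ~ List.In x (tvars t) ->
  List.In y (tvars (tsubst (subst1 x t) u)) ->
  y <> x /\ (List.In y (tvars t) \/ List.In y (tvars u)).
Proof.
move=> xt /tvars_tsubst [z [zu]]; rewrite /subst1.
case: eqP => [_ yt | zx [<-|[]]]; last by split; last right.
by split; [move=> yx; apply: xt; rewrite -yx | left].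
Qed.

Lemma evars_elim x t E y : ~ List.In x (tvars t) ->
  List.In y (evars (elim_eqs x t E)) -> List.In y (evars ((Var x, t) :: E)) /\ y <> x.
Proof.
rewrite evars_cons => xt /List.in_flat_map [_ [/List.in_map_iff [e [<- eE]]]] /= yE.
have yEvars u : List.In y (tvars u) -> u = e.1 \/ u = e.2 -> List.In y (evars E).
  move=> yu ue; apply/List.in_flat_map; exists e; split=> //.
  by apply/List.in_app_iff; case: ue => <-; auto.
case/List.in_app_iff: yE => /(tvars_subst1 xt) [yx [yt|yu]];
  split=> //; eauto.
Qed.

Lemma solves_elim s x t E : solves s ((Var x, t) :: E) -> solves s (elim_eqs x t E).
Proof.
move=> /solves_cons [/= sx sE] _ /List.in_map_iff [e [<- eE]] /=.
by rewrite !subst1_absorb //; apply: sE.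
Qed.

Lemma mgu_eqs_elim x t E th : ~ List.In x (tvars t) ->
  mgu_eqs (elim_eqs x t E) th -> mgu_eqs ((Var x, t) :: E) (scomp (subst1 x t) th).
Proof.
set sg := subst1 x t; set V := evars ((Var x, t) :: E) => xt [sol most idem rel].
have E1V w : List.In w (evars (elim_eqs x t E)) -> List.In w V /\ w <> x := evars_elim xt.
have sgt : tsubst sg t = t.
  by apply: tsubst_id_on => y yt; rewrite /sg /subst1; case: eqP => // yx; rewrite yx in yt.
have vars_th z w : List.In w (tvars (th z)) -> w = z \/ (List.In w V /\ w <> x).
  by case/(relevant_to_vars rel) => [|/E1V]; auto.
split.
- apply/solves_cons; split=> [|e eE].
    by rewrite /= -tsubst_comp sgt /scomp /sg /subst1 eqxx.
  by rewrite -!tsubst_comp; apply: (sol (_, _)); apply: List.in_map.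
- move=> s /[dup] /solves_cons [/= sx _] /solves_elim /most [d Hd]; exists d => y.
  rewrite /scomp tsubst_comp -[s y]/(tsubst s (Var y)) -(subst1_absorb (Var y) sx).
  apply: tsubst_ext => z _.
  by rewrite /scomp Hd.
- apply/idempotentP => v w /tvars_tsubst [z [/(@tvars_subst1 x t (Var v) z xt) [zx _] wz]].
  have wx : w <> x by case: (vars_th _ _ wz) => [->|[]].
  rewrite /scomp /sg /subst1; case: eqP => //= _.
  by move/idempotentP: idem; apply; exact: wz.
- move=> y thy; have yV : List.In y V.
    case: (eqVneq y x) => [->|yx]; first by apply/evars_cons; left; left.
    by move: thy; rewrite /scomp /sg /subst1 (negbTE yx) => /rel [/E1V []].
  split=> // w /tvars_tsubst [z [zy /vars_th [->|[]//]]].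
  rewrite /sg /subst1 in zy; case: eqP zy => [_ zt | _ [<-|[]] //].
  by apply/evars_cons; right; left.
Qed.

Lemma unify_var x t E s :
  (forall E1 s1, nvars E1 < nvars ((Var x, t) :: E) -> solves s1 E1 ->
     exists th, mgu_eqs E1 th) ->
  t <> Var x -> solves s ((Var x, t) :: E) -> exists th, mgu_eqs ((Var x, t) :: E) th.
Proof.
move=> IH tx sol; have [xt|xt] := classic (List.In x (tvars t)).
  by case/solves_cons: sol => /= sx _; case: (occurs_check xt tx sx).
have lt : nvars (elim_eqs x t E) < nvars ((Var x, t) :: E).
  by apply: nvars_lt (fun y => evars_elim xt) _; apply/evars_cons; left; left.
have [th Hth] := IH _ s lt (solves_elim sol).
by exists (scomp (subst1 x t) th); apply: mgu_eqs_elim.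
Qed.

(* Robinson's algorithm: every rule either removes a variable or keeps the
   variables and decreases the total size. *)
Lemma unify E s : solves s E -> exists th, mgu_eqs E th.
Proof.
have [n ltEn] := ubnP (nvars E); elim: n E s ltEn => // n IHn E s.
have [m ltEm] := ubnP (esize E); elim: m E s ltEm => // m IHm.
case=> [|[l r] E] s ltEm ltEn sol; first by exists sid; exact: mgu_eqs_nil.
have [slr sE] := (solves_cons _ _ _).1 sol.
have esizeE : esize ((l, r) :: E) = tsize l + tsize r + esize E by [].
have var_case y u : u <> Var y -> nvars ((Var y, u) :: E) <= nvars ((l, r) :: E) ->
    solves s ((Var y, u) :: E) -> exists th, mgu_eqs ((Var y, u) :: E) th.
  move=> uy leE; apply: unify_var uy => E1 s1 ltE1 /(IHn E1 s1); apply.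
  exact: leq_trans ltE1 (leq_trans leE ltEn).
case: l r => [x|f ts] [y|g us] in slr sol ltEm ltEn esizeE var_case *.
- case: (eqVneq x y) => [<-|xy]; last by apply: var_case => // -[/eqP]; rewrite eq_sym (negbTE xy).
  have ltE : esize E < m by move: ltEm; rewrite esizeE /=; lia.
  have ltnE : nvars E < n.+1.
    by apply: leq_ltn_trans ltEn; apply: nvars_le => z zE; apply/evars_cons; auto.
  by have [th Hth] := IHm E s ltE ltnE sE; exists th; apply: mgu_eqs_trivial.
- by apply: var_case.
- have [th Hth] : exists th, mgu_eqs ((Var y, Fun f ts) :: E) th.
    apply: var_case => //; first by apply: nvars_le => z; rewrite !evars_cons; tauto.
    by apply/solves_cons; split.
  by exists th; apply: mgu_eqs_swap.
- case: slr => <- /[dup] Emap /(f_equal (@length _)); rewrite !List.length_map => len.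
  have ltE : esize (List.combine ts us ++ E) < m.
    by move: ltEm; rewrite esizeE esize_app esize_combine //=; lia.
  have ltnE : nvars (List.combine ts us ++ E) < n.+1.
    apply: leq_ltn_trans ltEn; apply: nvars_le => z; rewrite evars_app evars_combine //.
    by rewrite evars_cons /=; tauto.
  have solE : solves s (List.combine ts us ++ E).
    by apply/solves_app; split; first exact/solves_combine.
  by have [th Hth] := IHm _ s ltE ltnE solE; exists th; apply: mgu_eqs_decompose.
Qed.

Definition idem_relevant_mgu (th : subst) (a b : atom) : Prop :=
  [/\ idempotent th, relevant th a b & mgu th a b].

Lemma atom_mgu a b s : unifier s a b -> exists th, idem_relevant_mgu th a b.
Proof.
case: a b => [pa la] [pb lb]; rewrite /unifier /asubst /= => -[<- Es].
have len : length la = length lb by rewrite -(List.length_map (tsubst s) la) Es List.length_map.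
have [th [sol most idem rel]] := unify ((solves_combine len s).2 Es).
have vars y : List.In y (evars (List.combine la lb)) ->
    List.In y (avars (Atom pa la) ++ avars (Atom pa lb)).
  by rewrite evars_combine // List.in_app_iff.
exists th; split=> //.
- by move=> x /rel [/vars Hx Hy]; split=> // y /Hy /vars.
split; first by rewrite /unifier /asubst /=; congr Atom; apply/solves_combine.
by move=> s' [/(solves_combine len) /most].
Qed.

(** * Substitutions and shiftings on atoms and p-goals *)

Lemma asubst_comp s1 s2 a : asubst s2 (asubst s1 a) = asubst (scomp s1 s2) a.
Proof.
rewrite /asubst /= List.map_map; congr Atom.
by apply: List.map_ext => t; apply: tsubst_comp.
Qed.

Lemma asubst_ext s1 s2 a : agree_on (avars a) s1 s2 -> asubst s1 a = asubst s2 a.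
Proof.
move=> E; rewrite /asubst; congr Atom; apply: List.map_ext_in => t Ht.
by apply: tsubst_ext => x Hx; apply: E; apply/List.in_flat_map; exists t.
Qed.

Lemma avars_asubst s a y :
  List.In y (avars (asubst s a)) <-> exists x, List.In x (avars a) /\ List.In y (tvars (s x)).
Proof.
rewrite /avars /= List.flat_map_concat_map List.map_map -List.flat_map_concat_map.
split.
  move=> /List.in_flat_map [t [Ht /tvars_tsubst [x [Hx Hy]]]].
  by exists x; split=> //; apply/List.in_flat_map; exists t.
move=> [x [/List.in_flat_map [t [Ht Hx]] Hy]]; apply/List.in_flat_map.
by exists t; split=> //; apply/tvars_tsubst; exists x.
Qed.

Lemma pgvars_cons u G x :
  List.In x (pgvars (u :: G)) <-> List.In x (avars u.1) \/ List.In x (pgvars G).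
Proof. exact: List.in_app_iff. Qed.

Lemma pgvars_app G1 G2 x :
  List.In x (pgvars (G1 ++ G2)) <-> List.In x (pgvars G1) \/ List.In x (pgvars G2).
Proof. by rewrite /pgvars List.flat_map_app List.in_app_iff. Qed.

Lemma pgvars_perm G H x : Permutation G H -> List.In x (pgvars G) -> List.In x (pgvars H).
Proof.
elim=> [//|u G' H' _ IH|u v G'|G1 G2 G3 _ IH1 _ IH2]; last by move/IH1/IH2.
  by rewrite !pgvars_cons; case; auto.
by rewrite !pgvars_cons; tauto.
Qed.

Lemma pgvars_pshift f G : pgvars (pshift f G) = pgvars G.
Proof. by elim: G => //= u G IH; rewrite /pgvars /= -/(pgvars _) IH. Qed.

Lemma pgvars_psubst s G y :
  List.In y (pgvars (psubst s G)) <-> exists x, List.In x (pgvars G) /\ List.In y (tvars (s x)).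
Proof.
elim: G => [|[a q] G IH]; first by split=> [[]|[x [[] _]]].
rewrite [psubst _ _]/= pgvars_cons avars_asubst IH; split.
  by case=> -[x [Hx Hy]]; exists x; split=> //; apply/pgvars_cons; auto.
by move=> [x [/pgvars_cons [Hx|Hx] Hy]]; [left|right]; exists x.
Qed.

Lemma psubst_comp s1 s2 G : psubst s2 (psubst s1 G) = psubst (scomp s1 s2) G.
Proof. by elim: G => //= u G ->; rewrite asubst_comp. Qed.

Lemma psubst_ext s1 s2 G : agree_on (pgvars G) s1 s2 -> psubst s1 G = psubst s2 G.
Proof.
elim: G => //= u G IH E; congr cons; last by apply: IH => x Hx; apply: E; apply/pgvars_cons; auto.
by rewrite (asubst_ext (s2 := s2)) // => x Hx; apply: E; apply/pgvars_cons; auto.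
Qed.

Lemma asubst_sid a : asubst sid a = a.
Proof. by case: a => p l; rewrite /asubst (List.map_ext _ id tsubst_sid) List.map_id. Qed.

Lemma psubst_sid G : psubst sid G = G.
Proof. by elim: G => //= -[a q] G ->; rewrite asubst_sid. Qed.

Lemma map_pshift_psubst f s G :
  List.map (fun u => (asubst s u.1, f u.2)) G = pshift f (psubst s G).
Proof. by rewrite /pshift /psubst List.map_map. Qed.

Lemma pshift_id G : pshift id G = G.
Proof. by elim: G => //= -[a q] G ->. Qed.

Lemma pshift_psubst f s G : pshift f (psubst s G) = psubst s (pshift f G).
Proof. by elim: G => //= u G ->. Qed.

Lemma pshift_comp f g G : pshift f (pshift g G) = pshift (fun q => f (g q)) G.
Proof. by elim: G => //= u G ->. Qed.

Lemma prios_psubst s G : prios (psubst s G) = prios G.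
Proof. by elim: G => //= u G ->. Qed.

Lemma prios_pshift f G : prios (pshift f G) = List.map f (prios G).
Proof. by elim: G => //= u G ->. Qed.

Lemma pshift_ext f g G : List.map f (prios G) = List.map g (prios G) -> pshift f G = pshift g G.
Proof. by elim: G => //= -[a q] G IH [-> /IH ->]. Qed.

Lemma shifting_id : shifting id.
Proof. by split=> //; exists id. Qed.

Lemma shifting_comp f g : shifting f -> shifting g -> shifting (fun q => f (g q)).
Proof. by move=> [f_lt f_bij] [g_lt g_bij]; split=> [x y /g_lt /f_lt|]; last exact: bij_comp. Qed.

Lemma shifting_inj f : shifting f -> injective f.
Proof. by move=> [_ /bij_inj]. Qed.

Lemma wf_map (f : patom -> patom) G :
  {homo f : u v / (u.2 < v.2)%R >-> (u.2 < v.2)%R} -> wf_pgoal G -> wf_pgoal (List.map f G).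
Proof. by move=> f_lt; rewrite /wf_pgoal -[List.map f G]/(map f G) sorted_map; apply: sub_sorted. Qed.

Lemma wf_pshift f G : shifting f -> wf_pgoal G -> wf_pgoal (pshift f G).
Proof. by move=> [f_lt _]; apply: wf_map => u v /f_lt. Qed.

Lemma wf_psubst s G : wf_pgoal G -> wf_pgoal (psubst s G).
Proof. exact: wf_map. Qed.

Lemma wf_tail u G : wf_pgoal (u :: G) -> wf_pgoal G.
Proof. exact: path_sorted. Qed.

(* Strict sortedness determines a list of priorities by its elements. *)
Lemma perm_wf_prios G H : wf_pgoal G -> wf_pgoal H -> Permutation G H -> prios G = prios H.
Proof.
have sorted_prios F : wf_pgoal F -> sorted (fun x y : rat => (x < y)%R) (prios F).
  by rewrite /prios -[List.map _ F]/(map _ F) sorted_map.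
move=> /sorted_prios wG /sorted_prios wH P; apply: Order.POrderTheory.lt_sorted_eq wG wH _ => q.
apply/idP/idP=> /In_mem Hq; apply/In_mem; apply: Permutation_in Hq; apply: Permutation_map => //.
exact: Permutation_sym.
Qed.

Lemma psum_nil F : wf_pgoal F -> psum F [::] F.
Proof. by move=> wF; do 3!split=> //; [move=> q _ [] | rewrite cats0]. Qed.

Lemma no_common_prio_shift f F G :
  shifting f -> no_common_prio F G -> no_common_prio (pshift f F) (pshift f G).
Proof.
move=> /shifting_inj f_inj nc q; rewrite !prios_pshift.
by move=> /List.in_map_iff [x [<- xF]] /List.in_map_iff [y [/f_inj -> yG]]; apply: nc xF yG.
Qed.

Lemma no_common_prio_eq F1 F2 G1 G2 : prios F1 = prios F2 -> prios G1 = prios G2 ->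
  no_common_prio F1 G1 -> no_common_prio F2 G2.
Proof. by rewrite /no_common_prio => <- <-. Qed.

(** * Fresh renamings *)

Definition swapn (N y : nat) : nat :=
  if y < N then y + N else if y < N + N then y - N else y.

Lemma swapnK N : involutive (swapn N).
Proof. by move=> y; rewrite /swapn; do !case: ifP; lia. Qed.

Lemma swapn_lt N y : y < N -> swapn N y = y + N.
Proof. by rewrite /swapn => ->. Qed.

Definition block_swap (N : nat) : subst := fun y => Var (swapn N y).

Lemma renaming_block_swap xi N : renaming xi -> renaming (scomp xi (block_swap N)).
Proof.
move=> [xi_var [xi_inj xi_onto]]; split; [|split].
- by move=> x; rewrite /scomp; have [y ->] := xi_var x; exists (swapn N y).
- move=> x y; have [u Eu] := xi_var x; have [v Ev] := xi_var y.
  by rewrite /scomp Eu Ev /= => -[/(can_inj (swapnK N)) uv]; apply: xi_inj; rewrite Eu Ev uv.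
- by move=> y; have [x Ex] := xi_onto (swapn N y); exists x; rewrite /scomp Ex /= /block_swap swapnK.
Qed.

Definition renamed_clause_vars (c : clause) (xi : subst) : list nat :=
  avars (asubst xi (chead c)) ++ pgvars (psubst xi (cbody c)).

Lemma renamed_clause_vars_comp c xi s y :
  List.In y (renamed_clause_vars c (scomp xi s)) ->
  exists z, List.In z (renamed_clause_vars c xi) /\ List.In y (tvars (s z)).
Proof.
rewrite /renamed_clause_vars -asubst_comp -psubst_comp.
by case/List.in_app_iff=> [/avars_asubst|/pgvars_psubst] [z [Hz Hy]];
  exists z; split=> //; apply/List.in_app_iff; auto.
Qed.

(* The renamed clause is moved above every variable in [L ++ R]; [s] reads the
   moved variables back through [block_swap N], which is an involution. *)
Lemma fresh_instance (G : pgoal) (c : clause) xi psi delta sigma (L : list nat) :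
  renaming xi -> disjointL (pgvars G) (renamed_clause_vars c xi) ->
  (forall v, List.In v (pgvars (psubst psi G)) -> List.In v L) ->
  agree_on (pgvars G) (scomp psi delta) sigma ->
  exists xi' chi s, [/\ renaming xi', disjointL (renamed_clause_vars c xi') L,
    agree_on (pgvars G) chi psi,
    asubst chi (asubst xi (chead c)) = asubst xi' (chead c) /\
      psubst chi (psubst xi (cbody c)) = psubst xi' (cbody c) &
    agree_on (pgvars G ++ renamed_clause_vars c xi) (scomp chi s) sigma].
Proof.
set R := renamed_clause_vars c xi => xi_ren GR psiL agr.
set N := (sumn (L ++ R)).+1.
have LN v : List.In v L -> v < N by move=> vL; apply/In_leq_sumn/List.in_app_iff; left.
have RN v : List.In v R -> v < N by move=> vR; apply/In_leq_sumn/List.in_app_iff; right.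
pose chi v := if v \in pgvars G then psi v else block_swap N v.
pose s v := if v \in L then delta v else tsubst sigma (block_swap N v).
have chiR : agree_on R chi (block_swap N).
  by move=> v vR; rewrite /chi; case: ifP => // /In_mem vG; case: (GR v vG vR).
exists (scomp xi (block_swap N)), chi, s; split.
- exact: renaming_block_swap.
- move=> y /renamed_clause_vars_comp [z [zR [<-|[]]]] /LN.
  by rewrite swapn_lt; [lia | exact: RN].
- by move=> v /In_mem vG; rewrite /chi vG.
- split; first by rewrite -asubst_comp; apply: asubst_ext => v vh; apply/chiR/List.in_app_iff; left.
  by rewrite -psubst_comp; apply: psubst_ext => v vB; apply/chiR/List.in_app_iff; right.
move=> v /List.in_app_iff [vG|vR]; rewrite /scomp.
  rewrite /chi (In_mem _ _).1 // -agr //; apply: tsubst_ext => w w_psi.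
  by rewrite /s (In_mem _ _).1 //; apply/psiL/pgvars_psubst; exists v.
rewrite chiR //= /s ifF /block_swap /= ?swapnK //.
by apply/negP => /In_mem /LN; rewrite swapn_lt; [lia | exact: RN].
Qed.

Lemma lift_mgu th a b chi b' s tau (V : list nat) :
  mgu th a b -> asubst chi b = b' ->
  (forall x, List.In x (avars a ++ avars b) -> List.In x V) ->
  agree_on V (scomp chi s) (scomp th tau) ->
  exists al psi' delta', [/\ idem_relevant_mgu al (asubst chi a) b',
    forall x, scomp chi al x = scomp th psi' x &
    forall x, List.In x V -> agree_on (tvars (th x)) (scomp psi' delta') tau].
Proof.
move=> [th_unif th_most] chib abV agr.
have s_unif : unifier s (asubst chi a) b'.
  rewrite /unifier -chib !asubst_comp !(@asubst_ext (scomp chi s) (scomp th tau)).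
  - by rewrite -!asubst_comp th_unif.
  - by move=> x xb; apply/agr/abV/List.in_app_iff; right.
  - by move=> x xa; apply/agr/abV/List.in_app_iff; left.
have [al [al_idem al_rel [al_unif al_most]]] := atom_mgu s_unif.
have [e Ee] := al_most s s_unif.
have [psi' Epsi'] : exists psi', forall x, scomp chi al x = tsubst psi' (th x).
  by apply: th_most; rewrite /unifier -!asubst_comp al_unif chib.
exists al, psi', e; split=> // x xV; apply: eq_tsubst_agree.
rewrite -tsubst_comp -Epsi' -[tsubst tau _]/(scomp th tau x) -(agr x xV) /scomp tsubst_comp.
by apply: tsubst_ext => y _; rewrite /scomp -Ee.
Qed.

(** * Instances of priority derivation steps *)

Lemma step_instance (d : step) a p K H chi q r pi' xi' al G' :
  is_step d -> st_goal d = (a, p) :: K ->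
  psum K (pshift (st_shift d) (psubst (st_ren d) (cbody (st_clause d)))) H ->
  G' = (asubst chi a, q) :: pshift r (psubst chi K) -> wf_pgoal G' ->
  shifting r -> shifting pi' ->
  List.map pi' (prios (cbody (st_clause d))) =
    List.map (fun x => r (st_shift d x)) (prios (cbody (st_clause d))) ->
  renaming xi' ->
  psubst chi (psubst (st_ren d) (cbody (st_clause d))) = psubst xi' (cbody (st_clause d)) ->
  disjointL (pgvars G') (renamed_clause_vars (st_clause d) xi') ->
  idem_relevant_mgu al (asubst chi a) (asubst xi' (chead (st_clause d))) ->
  is_step (Step G' (st_clause d) xi' al pi' (psubst al (pshift r (psubst chi H)))).
Proof.
move=> [_ [_ [_ [_ [_ [wB _]]]]]] _ [wK [_ [nc [wH P]]]] EG' wG' r_sh pi'_sh Epi'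
  xi'_ren Exi' dis [idem rel mgu_al].
set B := cbody (st_clause d) in wB P nc Epi' Exi' *; set pi := st_shift d in P nc Epi' *.
exists (asubst chi a), q, (pshift r (psubst chi K)).
do 9![split; first by []]; exists (pshift r (psubst chi H)); split=> //.
split; first by apply: (@wf_tail (asubst chi a, q)); rewrite -EG'.
split; first exact: wf_pshift pi'_sh (wf_psubst _ wB).
split.
  apply: no_common_prio_eq (no_common_prio_shift r_sh nc); first by rewrite !prios_pshift prios_psubst.
  by rewrite !prios_pshift !prios_psubst Epi' List.map_map.
split; first exact: wf_pshift r_sh (wf_psubst _ wH).
have := Permutation_map (fun u => (asubst chi u.1, r u.2)) P.
rewrite List.map_app !map_pshift_psubst -pshift_psubst Exi' pshift_comp.
by rewrite (@pshift_ext _ pi' (psubst xi' B)) // prios_psubst.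
Qed.

Lemma pgvars_step_res d v : is_step d -> List.In v (pgvars (st_res d)) ->
  exists x, List.In x (pgvars (st_goal d) ++ rcvars d) /\ List.In v (tvars (st_mgu d x)).
Proof.
move=> [a [p [K [Eg [_ [_ [_ [_ [_ [_ [_ [_ [H [[_ [_ [_ [_ /Permutation_sym P]]]] ->]]]]]]]]]]]]]].
move=> /pgvars_psubst [x [xH vx]]; exists x; split=> //.
case/(pgvars_perm P)/pgvars_app: xH => [xK|xB]; apply/List.in_app_iff.
  by left; rewrite Eg; apply/pgvars_cons; right.
by right; apply/List.in_app_iff; right; rewrite pgvars_pshift in xB.
Qed.

Lemma cong_lowering_same d1 d2 : is_step d1 -> is_step d2 ->
  st_goal d1 = st_goal d2 -> st_clause d1 = st_clause d2 -> st_shift d1 = st_shift d2 ->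
  cong_lowering d1 d2 [::].
Proof.
move=> low_step d2_step Eg Ec Es; have [a [p [K [Eg1 [wg _]]]]] := low_step.
rewrite Eg1 in wg; exists sid, id, K; split.
  do 4!split=> //; first exact: shifting_id.
  exists a, p, K; rewrite pshift_id psubst_sid -Eg Eg1 asubst_sid.
  by do 2!split=> //; exact: psum_nil (wf_tail wg).
by exists id; split; [exact: shifting_id | rewrite !pshift_id Es].
Qed.

Lemma si_lowering_shift S d d1 a p K psi rho :
  si_scheduling_rule S -> S d -> is_step d1 -> st_goal d = (a, p) :: K ->
  st_goal d1 = (asubst psi a, rho p) :: pshift rho (psubst psi K) ->
  st_clause d1 = st_clause d -> shifting rho ->
  exists pi2 rh, [/\ shifting pi2, shifting rh,
    List.map rh (prios K) = List.map rho (prios K),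
    List.map pi2 (prios (cbody (st_clause d))) =
      List.map (fun x => rh (st_shift d x)) (prios (cbody (st_clause d))) &
    forall d3, is_step d3 -> st_goal d3 = st_goal d1 -> st_clause d3 = st_clause d ->
      st_shift d3 = pi2 -> S d3].
Proof.
move=> [[S_step [S_ex S_closed]] S_si] Sd low_step Eg Eg1 Ec1 rho_sh.
have [d2 [Sd2 [Eg2 Ec2]]] := S_ex d1 low_step.
have d2_step := S_step d2 Sd2.
have wK' : wf_pgoal (pshift rho (psubst psi K)).
  by case: low_step => [a' [p' [F [_ [wg _]]]]]; rewrite Eg1 in wg; exact: wf_tail wg.
have low : lowering d d2 [::].
  exists psi, rho, K; split; first exact: S_step.
  split=> //; split; first by rewrite Ec2.
  split=> //; exists a, p, (pshift rho (psubst psi K)).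
  by split=> //; split; [exact: psum_nil | rewrite Eg2].
have [lam [sig [K0 [[_ [_ [_ [_ [a0 [p0 [KX [Eg0 [Psum Eg2']]]]]]]]] [rh [rh_sh [ErhK ErhB]]]]]]] :=
  S_si d d2 [::] Sd Sd2 low.
move: Eg0 Eg2'; rewrite Eg Eg2 Eg1 => -[_ _ EK0] /(congr1 behead) /= EKX; subst K0.
have [w1 [_ [_ [w2 P]]]] := Psum; rewrite cats0 -EKX in P w2.
have d2_shift : shifting (st_shift d2).
  by case: d2_step => [? [? [? [_ [_ [_ [_ [_ [_ [_ [_ [sh _]]]]]]]]]]]].
exists (st_shift d2), rh; split=> //.
- have := perm_wf_prios w1 w2 P; rewrite !prios_pshift !prios_psubst => <-.
  by rewrite -!prios_pshift ErhK.
- by have := f_equal prios ErhB; rewrite !prios_pshift List.map_map => <-.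
move=> d3 sched_step Eg3 Ec3 Es3; apply: (S_closed d2) => //.
by split; exists [::]; apply: cong_lowering_same; rewrite // ?Eg3 ?Eg2 ?Eg1 ?Ec3 ?Ec2 ?Ec1.
Qed.

(** * Lifting derivations to instances *)

Lemma lift_step S d tau psi rho delta seen :
  si_scheduling_rule S -> S d -> shifting rho ->
  agree_on (pgvars (st_goal d)) (scomp psi delta) (scomp (st_mgu d) tau) ->
  exists d', [/\ S d', st_goal d' = pshift rho (psubst psi (st_goal d)),
      st_clause d' = st_clause d & disjointL (rcvars d') seen] /\
    exists psi' rho' delta', [/\ shifting rho',
      st_res d' = pshift rho' (psubst psi' (st_res d)) &
      agree_on (pgvars (st_res d)) (scomp psi' delta') tau].
Proof.
move=> HS Sd rho_sh agr; have d_step := HS.1.1 d Sd.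
have [a [p [K [Eg [wg [_ [xi_ren [dis [_ [_ [th_mgu [pi_sh [H [Psum Eres]]]]]]]]]]]]]] := d_step.
set G' := pshift rho (psubst psi (st_goal d)).
have G'L v : List.In v (pgvars (psubst psi (st_goal d))) -> List.In v (seen ++ pgvars G').
  by move=> vG; apply/List.in_app_iff; right; rewrite pgvars_pshift.
have [xi' [chi [s [xi'_ren fresh chi_psi [chi_h chi_B] agr_s]]]] :=
  fresh_instance xi_ren dis G'L agr.
have unifV x : List.In x (avars a ++ avars (asubst (st_ren d) (chead (st_clause d)))) ->
    List.In x (pgvars (st_goal d) ++ renamed_clause_vars (st_clause d) (st_ren d)).
  case/List.in_app_iff=> [xa|xh]; apply/List.in_app_iff; last by right; apply/List.in_app_iff; left.
  by left; rewrite Eg; apply/pgvars_cons; left.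
have [al [psi' [delta' [al_mgu Epsi' agr']]]] := lift_mgu th_mgu chi_h unifV agr_s.
have chi_a : asubst chi a = asubst psi a.
  by apply: asubst_ext => x xa; apply: chi_psi; rewrite Eg; apply/pgvars_cons; left.
have chi_K : psubst chi K = psubst psi K.
  by apply: psubst_ext => x xK; apply: chi_psi; rewrite Eg; apply/pgvars_cons; right.
have EG' r : List.map r (prios K) = List.map rho (prios K) ->
    G' = (asubst chi a, rho p) :: pshift r (psubst chi K).
  by move=> Er; rewrite /G' Eg /= chi_a chi_K; congr cons; apply: pshift_ext; rewrite prios_psubst.
have wG' : wf_pgoal G' by apply: wf_pshift => //; apply: wf_psubst.
have disG' : disjointL (pgvars G') (renamed_clause_vars (st_clause d) xi').
  by move=> v vG' vR; apply: (fresh v vR); apply/List.in_app_iff; right.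
have low_step := step_instance d_step Eg Psum (EG' rho erefl) wG' rho_sh
  (shifting_comp rho_sh pi_sh) erefl xi'_ren chi_B disG' al_mgu.
have [pi2 [rh [pi2_sh rh_sh ErhK Epi2 S_closed]]] :=
  si_lowering_shift HS Sd low_step Eg (EG' rho erefl) erefl rho_sh.
have sched_step := step_instance d_step Eg Psum (EG' rh ErhK) wG' rh_sh pi2_sh Epi2
  xi'_ren chi_B disG' al_mgu.
exists (Step G' (st_clause d) xi' al pi2 (psubst al (pshift rh (psubst chi H)))); split.
  split=> //; first exact: S_closed sched_step erefl erefl erefl.
  by move=> v vR vs; apply: (fresh v vR); apply/List.in_app_iff; left.
exists psi', rh, delta'; split=> //.
  rewrite /= Eres -pshift_psubst !psubst_comp; congr pshift.
  by apply: psubst_ext => x _; apply: Epsi'.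
by move=> v /(pgvars_step_res d_step) [x [xV vx]]; apply: agr' xV _ vx.
Qed.

Lemma lift_derivation S phi : si_scheduling_rule S ->
  forall ds G psi rho delta seen, via S ds -> chain G ds -> shifting rho ->
  agree_on (pgvars G) (scomp psi delta) (scomp (composed_mgu ds) phi) ->
  exists ds', [/\ length ds' = length ds, via S ds', chain (pshift rho (psubst psi G)) ds',
    fresh_ok seen ds' & template ds' = template ds].
Proof.
move=> HS; elim=> [|d ds IH] G psi rho delta seen; first by exists [::].
move=> /List.Forall_cons_iff [Sd Sds] [<- ch] rho_sh agr.
have agr_d : agree_on (pgvars (st_goal d)) (scomp psi delta)
    (scomp (st_mgu d) (scomp (composed_mgu ds) phi)).
  by move=> v /agr ->; rewrite scompA.
have [d' [[Sd' Eg' Ec' fresh'] [psi' [rho' [delta' [rho'_sh Eres' agr']]]]]] :=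
  lift_step seen HS Sd rho_sh agr_d.
have [ds' [len' Sds' ch' fr' tpl']] := IH _ psi' rho' delta' (seen ++ rcvars d') Sds ch rho'_sh agr'.
exists (d' :: ds'); split=> /=; [by rewrite len' | exact: List.Forall_cons | | | by rewrite Ec' tpl'].
  by split; [|rewrite Eres'].
by split.
Qed.

Theorem lemmaB1 (S : step -> Prop) (G : pgoal) (phi : subst) (ds : list step) :
  si_scheduling_rule S ->
  pderivation G ds -> via S ds ->
  exists ds' : list step,
    pderivation (psubst phi (psubst (composed_mgu ds) G)) ds' /\
    via S ds' /\ template ds' = template ds.
Proof.
move=> HS [ds_nil [_ [ch _]]] Sds.
set G' := psubst phi (psubst (composed_mgu ds) G).
have [ds' [len' Sds' ch' fr' tpl']] := lift_derivation HS (pgvars G') Sds ch shifting_id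
  (fun v _ => tsubst_sid (scomp (composed_mgu ds) phi v)).
exists ds'; split=> //; split.
  by move=> E; move: len'; rewrite E => /esym /List.length_zero_iff_nil.
split; first exact: List.Forall_impl HS.1.1 _ Sds'.
by rewrite pshift_id -psubst_comp in ch'.
Qed.
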